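(* In the oceanic model under the proportional reward sharing scheme, the Price of Stability equals $1$, for every stake distribution of the atomic players and every total mass $L\ge 0$ of non-atomic players (in particular also in the purely atomic model $L=0$).
   Context: Oceanic model: a finite set $N_a$ of atomic players, player $i$ having stake $a_i>0$, and a continuum of non-atomic players of total mass $L\ge 0$ (a measurable set of them contributes stake equal to its measure). Threshold $h>0$, and $a_i<h$ for every atomic player. Each player opens her own pool or joins one; pools partition all players. A pool $S$ has stake $m(S)$ (non-atomic mass plus atomic stakes in $S$) and reward $\rho(S)=1$ if $m(S)\ge h$ (winning), else $0$. Proportional scheme: an atomic player $i$ in pool $C$ receives $\frac{a_i}{m(C)}\rho(C)$, and non-atomic players in $C$ receive $\rho(C)/m(C)$ per unit of stake. A partition into winning pools is a Nash equilibrium if no atomic player can strictly increase her payment by moving to another pool of the partition or opening a new pool alone, and no non-atomic player can strictly increase her per-unit reward by moving to another pool (a non-atomic player is infinitesimal, so her move does not change the per-unit reward of the pool she joins). $OPT(G)$ is the maximum number of pools of stake at least $h$ in a partition of all players (games are considered with total stake at least $h$); $W(\Pi)$ is the number of winning pools of $\Pi$; the Price of Stability is $\min_\Pi OPT(G)/W(\Pi)$ over Nash equilibrium partitions. *)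

From HB Require Import structures.
From mathcomp Require Import all_boot all_order all_algebra.
From mathcomp Require Import reals.
Set Implicit Arguments. Unset Strict Implicit. Unset Printing Implicit Defensive.
Import Order.TTheory GRing.Theory Num.Theory.
Local Open Scope ring_scope.

(* A partition (into finitely many pools indexed by 'I_npools) is described by
   the non-atomic mass [nmass j] put in pool [j] and by the pool [pool_of i]
   joined by each atomic player [i].  Pools carrying no stake are never winning,
   so only finitely many pools can be winning and losing pools may be merged
   without decreasing the number of winning pools. *)
Record partition (R : realType) (n : nat) := Partition {
  npools : nat;
  nmass : 'I_npools -> R;
  pool_of : 'I_n -> 'I_npools }.
Arguments npools {R n} p.
Arguments nmass {R n} p j.
Arguments pool_of {R n} p i.

Section Oceanic.
Variables (R : realType) (n : nat) (a : 'I_n -> R) (L h : R).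

Definition rho (s : R) : R := if h <= s then 1 else 0.

Definition valid_partition (P : partition R n) : Prop :=
  (forall j, 0 <= nmass P j) /\ \sum_(j < npools P) nmass P j = L.

Definition stake (P : partition R n) (j : 'I_(npools P)) : R :=
  nmass P j + \sum_(i < n | pool_of P i == j) a i.
Arguments stake P j : clear implicits.

Definition nwinning (P : partition R n) : nat :=
  #|[pred j : 'I_(npools P) | h <= stake P j]|.

Definition atomic_payment (P : partition R n) (i : 'I_n) : R :=
  a i / stake P (pool_of P i) * rho (stake P (pool_of P i)).

Definition nash_eq (P : partition R n) : Prop :=
  valid_partition P /\
  (forall j, h <= stake P j) /\
  (forall (i : 'I_n) (j : 'I_(npools P)), j != pool_of P i ->
     a i / (stake P j + a i) * rho (stake P j + a i) <= atomic_payment P i) /\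
  (* atomic players: no profitable opening of a new pool alone *)
  (forall i : 'I_n, a i / a i * rho (a i) <= atomic_payment P i) /\
  (* non-atomic players (present in pools of positive non-atomic mass):
     no pool of the partition with strictly larger per-unit reward *)
  (forall j j' : 'I_(npools P), 0 < nmass P j ->
     rho (stake P j') / stake P j' <= rho (stake P j) / stake P j).

Definition is_OPT (k : nat) : Prop :=
  (exists P, valid_partition P /\ nwinning P = k) /\
  (forall P, valid_partition P -> (nwinning P <= k)%N).

Definition PoS_is (opt : nat) (r : R) : Prop :=
  (exists P, nash_eq P /\ opt%:R / (nwinning P)%:R = r) /\
  (forall P, nash_eq P -> r <= opt%:R / (nwinning P)%:R).

End Oceanic.

From Pilot Require Import Defs.
From HB Require Import structures.
From mathcomp Require Import all_boot all_order all_algebra.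
From mathcomp Require Import reals boolp.
From mathcomp Require Import ring lra.
Set Implicit Arguments. Unset Strict Implicit. Unset Printing Implicit Defensive.
Import Order.TTheory GRing.Theory Num.Theory.
Local Open Scope ring_scope.

(* Start from an optimal partition, with k winning pools, and merge every losing
   pool into a winning one.  For each placement s of the atomic players into k
   pools, spread the non-atomic mass by water filling (always onto the lowest
   pools): among all distributions of that mass this maximizes the smallest
   stake and minimizes the sum of squared stakes.  Pick s minimizing the sum of
   squared stakes among the placements whose k pools are all winning.  If a
   player of stake a_i in a pool of stake x gained by joining a pool of stake y,
   then x > y + a_i, and the move would lower the sum of squares by
   2 a_i (x - y - a_i) while keeping every pool winning.  Hence s is a Nash
   equilibrium with OPT winning pools: non-atomic players are balanced by water
   filling, and opening a pool alone never pays since a_i < h. *)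

Lemma exists_maxn (Q : nat -> Prop) (N : nat) :
  (exists m, Q m) -> (forall m, Q m -> (m <= N)%N) ->
  exists k, Q k /\ forall m, Q m -> (m <= k)%N.
Proof.
move=> [m0 Qm0] QN.
have exQ : exists m, `[< Q m >] by exists m0; apply/asboolP.
have leQN m : `[< Q m >] -> (m <= N)%N by move/asboolP/QN.
case: (ex_maxnP exQ leQN) => k /asboolP Qk maxk.
by exists k; split=> // m Qm; apply/maxk/asboolP.
Qed.

Section WaterFilling.
Variables (R : realType) (T : finType) (A : T -> R) (L : R).

Definition fill_level (S : {set T}) : R := (L + \sum_(t in S) A t) / #|S|%:R.

(* The level reached by pouring L into vessels with bottoms A t: the least
   average (L + sum_S A) / |S| over nonempty S, attained at the set of
   submerged vessels. *)
Definition water_level : R :=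
  fill_level [arg min_(S < [set: T] | S != set0) fill_level S]%O.

Definition water_fill (t : T) : R := Num.max 0 (water_level - A t).

Lemma water_fill_ge0 t : 0 <= water_fill t.
Proof. by rewrite le_max lexx. Qed.

Hypotheses (L_ge0 : 0 <= L) (t0 : T).

Let setT_neq0 : [set: T] != set0.
Proof. by apply/set0Pn; exists t0; rewrite inE. Qed.

Lemma water_level_min S : S != set0 -> water_level <= fill_level S.
Proof.
by move=> S0; rewrite /water_level; case: arg_minP => [|S' _ /(_ S S0)//]; exact: setT_neq0.
Qed.

Lemma water_level_attained : exists2 S, S != set0 & water_level = fill_level S.
Proof.
by rewrite /water_level; case: arg_minP => [|S S0 _]; [exact: setT_neq0 | exists S].
Qed.

Lemma le_fill_level w (S : {set T}) : S != set0 ->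
  (w <= fill_level S) = (\sum_(t in S) (w - A t) <= L).
Proof.
move=> S0; have S_gt0 : 0 < #|S|%:R :> R by rewrite ltr0n card_gt0.
by rewrite ler_pdivlMr // sumrB sumr_const lerBlDr mulr_natr.
Qed.

Lemma fill_levelE (S : {set T}) : S != set0 ->
  \sum_(t in S) (fill_level S - A t) = L.
Proof.
move=> S0; have S_gt0 : #|S|%:R != 0 :> R by rewrite pnatr_eq0 -lt0n card_gt0.
by rewrite sumrB sumr_const /fill_level -[_ *+ #|S|]mulr_natr divfK // addrK.
Qed.

Lemma water_fillE t :
  water_fill t = if A t < water_level then water_level - A t else 0.
Proof. by rewrite /water_fill -subr_gt0; case: ltP => [/ltW/max_idPr|/max_idPl]. Qed.

Lemma sum_water_fill : \sum_t water_fill t = L.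
Proof.
have [S S0 wS] := water_level_attained.
apply/le_anti/andP; split.
  pose U := [set t | A t < water_level].
  have -> : \sum_t water_fill t = \sum_(t in U) (water_level - A t).
    by rewrite [RHS]big_mkcond; apply: eq_bigr => t _; rewrite water_fillE inE.
  have [->|U0] := eqVneq U set0; first by rewrite big_set0.
  by rewrite -le_fill_level // water_level_min.
rewrite -{1}(fill_levelE S0) -wS [X in _ <= X](bigID (mem S)) /=.
apply: ler_wpDr; first by apply: sumr_ge0 => t _; rewrite le_max lexx.
by apply: ler_sum => t _; rewrite le_max lexx orbT.
Qed.

Lemma water_fill_level t : water_fill t + A t = Num.max water_level (A t).
Proof.
by rewrite water_fillE; case: ltP => _; rewrite ?subrK ?add0r.
Qed.

Lemma water_fill_balanced t t' :
  0 < water_fill t -> water_fill t + A t <= water_fill t' + A t'.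
Proof.
rewrite !water_fill_level water_fillE.
by case: (ltP (A t) water_level) => _; rewrite ?le_max ?lexx ?ltxx.
Qed.

Lemma water_fill_maximin (nu : T -> R) (b : R) :
  (forall t, 0 <= nu t) -> \sum_t nu t = L ->
  (forall t, b <= nu t + A t) -> forall t, b <= water_fill t + A t.
Proof.
move=> nu_ge0 sum_nu b_le t; rewrite leNgt; apply/negP => lt_b.
have le_nu p : water_fill p <= nu p.
  rewrite ge_max nu_ge0 lerBlDr; apply: le_trans (b_le p); apply/ltW.
  by apply: le_lt_trans lt_b; rewrite water_fill_level le_max lexx.
have lt_nu : water_fill t < nu t by rewrite -(ltrD2r (A t)) (lt_le_trans lt_b).
suff : \sum_p water_fill p < \sum_p nu p by rewrite sum_water_fill sum_nu ltxx.
rewrite (bigD1 t) //= [X in _ < X](bigD1 t) //=.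
by apply: ltr_leD => //; apply: ler_sum.
Qed.

Lemma water_fill_sqr_min (nu : T -> R) :
  (forall t, 0 <= nu t) -> \sum_t nu t = L ->
  \sum_t (water_fill t + A t) ^+ 2 <= \sum_t (nu t + A t) ^+ 2.
Proof.
move=> nu_ge0 sum_nu.
(* With x := water_fill t + A t and d := nu t - water_fill t,
   (x + d)^2 - x^2 >= 2 x d >= 2 water_level d, since x exceeds the level
   only where water_fill t = 0, i.e. where d >= 0. *)
have key t : 2 * water_level * (nu t - water_fill t)
             <= (nu t + A t) ^+ 2 - (water_fill t + A t) ^+ 2.
  have := sqr_ge0 (nu t + A t - water_level); have := nu_ge0 t.
  by rewrite water_fillE !expr2; case: (ltP (A t) water_level) => *; nra.
rewrite -subr_ge0 -sumrB; apply: le_trans (ler_sum _ (fun t _ => key t)).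
by rewrite -mulr_sumr sumrB sum_nu sum_water_fill subrr mulr0.
Qed.

End WaterFilling.

Lemma sumrB_pair (V : zmodType) (T : finType) (F G : T -> V) (c j : T) :
  c != j -> (forall x, x != c -> x != j -> F x = G x) ->
  \sum_x F x - \sum_x G x = (F c - G c) + (F j - G j).
Proof.
move=> cj FG; rewrite -sumrB (bigD1 c) //= (bigD1 j) 1?eq_sym //=.
by rewrite big1 ?addr0 // => x /andP[xc xj]; rewrite FG ?subrr.
Qed.

Section Oceanic.
Variables (R : realType) (n : nat) (a : 'I_n -> R) (L h : R).
Hypotheses (h_gt0 : 0 < h) (L_ge0 : 0 <= L).
Hypotheses (a_gt0 : forall i, 0 < a i) (a_lt_h : forall i, a i < h).
Hypothesis h_le_total : h <= L + \sum_i a i.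

Let a_ge0 i : 0 <= a i. Proof. exact: ltW. Qed.

Lemma rho_win x : h <= x -> rho h x = 1.
Proof. by rewrite /rho => ->. Qed.

Lemma rho_lose x : x < h -> rho h x = 0.
Proof. by rewrite /rho leNgt => ->. Qed.

Lemma stake_ge0 (P : Defs.partition R n) j :
  valid_partition L P -> 0 <= stake a (P := P) j.
Proof. by case=> nmass_ge0 _; rewrite addr_ge0 ?sumr_ge0. Qed.

Lemma sum_stake (P : Defs.partition R n) :
  valid_partition L P -> \sum_j stake a (P := P) j = L + \sum_i a i.
Proof.
case=> _ <-; rewrite big_split /=; congr (_ + _).
by rewrite [RHS](partition_big (pool_of P) predT).
Qed.

Lemma nwinning_le (P : Defs.partition R n) :
  valid_partition L P -> (nwinning a h P <= Num.trunc ((L + \sum_i a i) / h))%N.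
Proof.
move=> vP; rewrite truncn_ge_nat ?divr_ge0 ?addr_ge0 ?sumr_ge0 ?(ltW h_gt0) //.
rewrite ler_pdivlMr // -(sum_stake vP) (bigID (fun j => h <= stake a j)) /=.
apply: ler_wpDr; first by apply: sumr_ge0 => j _; apply: stake_ge0.
by rewrite mulr_natl /nwinning -sumr_const; apply: ler_sum.
Qed.

Definition grand_coalition : Defs.partition R n :=
  Partition (fun _ : 'I_1 => L) (fun _ => ord0).

Lemma valid_grand_coalition : valid_partition L grand_coalition.
Proof. by split=> //; rewrite big_ord1. Qed.

Lemma nwinning_grand_coalition : nwinning a h grand_coalition = 1%N.
Proof.
rewrite /nwinning -[RHS](card_ord 1); apply: eq_card => j; rewrite inE /stake /=.
by rewrite (eq_bigl predT) // => i; rewrite /= !ord1.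
Qed.

Lemma exists_OPT : exists k, is_OPT a L h k.
Proof.
pose achieved m := exists P, valid_partition L P /\ nwinning a h P = m.
have bounded m : achieved m -> (m <= Num.trunc ((L + \sum_i a i) / h))%N.
  by case=> P [vP <-]; apply: nwinning_le.
have [|k [optk maxk]] := exists_maxn _ bounded.
  exists 1%N, grand_coalition.
  by rewrite nwinning_grand_coalition; split=> //; apply: valid_grand_coalition.
by exists k; split=> // P vP; apply: maxk; exists P.
Qed.

Lemma OPT_gt0 k : is_OPT a L h k -> (0 < k)%N.
Proof.
by case=> _ /(_ _ valid_grand_coalition); rewrite nwinning_grand_coalition.
Qed.

Lemma nash_nwinning_gt0 (P : Defs.partition R n) :
  nash_eq a L h P -> (0 < nwinning a h P)%N.
Proof.
case=> vP [win _]; case: (pickP (@predT 'I_(npools P))) => [j _|none].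
  by apply/card_gt0P; exists j; rewrite inE win.
have := sum_stake vP; rewrite big_pred0 // => total0.
by move: h_le_total; rewrite -total0 leNgt h_gt0.
Qed.

Definition coarsen (P : Defs.partition R n) m (f : 'I_(npools P) -> 'I_m) :
    Defs.partition R n :=
  Partition (fun t => \sum_(j | f j == t) nmass P j) [ffun i => f (pool_of P i)].

Lemma valid_coarsen (P : Defs.partition R n) m (f : 'I_(npools P) -> 'I_m) :
  valid_partition L P -> valid_partition L (coarsen f).
Proof.
case=> nmass_ge0 sum_nmass; split=> [t|]; first exact: sumr_ge0.
by rewrite -sum_nmass [RHS](partition_big f predT).
Qed.

Lemma stake_coarsen (P : Defs.partition R n) m (f : 'I_(npools P) -> 'I_m) t :
  stake a (P := coarsen f) t = \sum_(j | f j == t) stake a (P := P) j.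
Proof.
rewrite /stake big_split /=; congr (_ + _).
rewrite (partition_big (pool_of P) (fun j => f j == t)) => [|i]; last by rewrite ffunE.
apply: eq_bigr => j /eqP fj; apply: eq_bigl => i; rewrite ffunE.
by case: (eqVneq (pool_of P i) j) => [->|_]; rewrite ?fj ?eqxx ?andbF.
Qed.

Lemma merge_losing_pools (P : Defs.partition R n) k :
  valid_partition L P -> nwinning a h P = k -> (0 < k)%N ->
  exists f : 'I_(npools P) -> 'I_k, forall t, h <= stake a (P := coarsen f) t.
Proof.
(* Winning pools get distinct indices; enum_rank_in sends each losing pool to
   some arbitrary index. *)
move=> vP Pk k_gt0; pose W := [set j | h <= stake a (P := P) j].
have cardW : #|W| = k by rewrite -Pk /nwinning cardsE.
have [j0 j0W] : exists j0, j0 \in W by apply/set0Pn; rewrite -card_gt0 cardW.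
exists (fun j => cast_ord cardW (enum_rank_in j0W j)) => t.
pose jt := enum_val (cast_ord (esym cardW) t).
have jtW : jt \in W by apply: enum_valP.
rewrite stake_coarsen (bigD1 jt) /=; last by rewrite /jt enum_valK_in cast_ordKV.
apply: ler_wpDr; first by apply: sumr_ge0 => j _; apply: stake_ge0.
by move: jtW; rewrite inE.
Qed.

Definition sq_stakes (P : Defs.partition R n) : R :=
  \sum_j stake a (P := P) j ^+ 2.

Section Profiles.
Variable k : nat.
Hypothesis k_gt0 : (0 < k)%N.

Definition load (s : 'I_n -> 'I_k) (t : 'I_k) : R := \sum_(i | s i == t) a i.

Definition profile (s : 'I_n -> 'I_k) : Defs.partition R n :=
  Partition (water_fill (load s) L) s.

Lemma stake_partition (nu : 'I_k -> R) (s : 'I_n -> 'I_k) t :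
  stake a (P := Partition nu s) t = nu t + load s t.
Proof. by []. Qed.

Lemma stake_profile (s : 'I_n -> 'I_k) t :
  stake a (P := profile s) t = water_fill (load s) L t + load s t.
Proof. by []. Qed.

Lemma sq_stakes_partition (nu : 'I_k -> R) (s : 'I_n -> 'I_k) :
  sq_stakes (Partition nu s) = \sum_t (nu t + load s t) ^+ 2.
Proof. by []. Qed.

Lemma valid_profile s : valid_partition L (profile s).
Proof.
split=> [t|]; first exact: water_fill_ge0.
exact: (sum_water_fill _ L_ge0 (Ordinal k_gt0)).
Qed.

Lemma profile_maximin (nu : 'I_k -> R) (s : 'I_n -> 'I_k) (b : R) :
  valid_partition L (Partition nu s) ->
  (forall t, b <= stake a (P := Partition nu s) t) ->
  forall t, b <= stake a (P := profile s) t.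
Proof. by case=> ? ?; apply: water_fill_maximin => //; exact: Ordinal k_gt0. Qed.

Lemma sq_stakes_profile_le (nu : 'I_k -> R) (s : 'I_n -> 'I_k) :
  valid_partition L (Partition nu s) ->
  sq_stakes (profile s) <= sq_stakes (Partition nu s).
Proof. by case=> ? ?; apply: water_fill_sqr_min => //; exact: Ordinal k_gt0. Qed.

Definition move_player (s : {ffun 'I_n -> 'I_k}) i j : {ffun 'I_n -> 'I_k} :=
  [ffun x => if x == i then j else s x].

Lemma load_move s i j t :
  load (move_player s i j) t =
  load s t - (if t == s i then a i else 0) + (if t == j then a i else 0).
Proof.
rewrite /load big_mkcond [in RHS]big_mkcond /= (bigD1 i) // [in RHS](bigD1 i) //=.
rewrite ffunE eqxx (eq_bigr (fun x => if s x == t then a x else 0)) => [|x /negbTE xi]; last first.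
  by rewrite ffunE xi.
by rewrite (eq_sym t j) (eq_sym t (s i)); ring.
Qed.

Lemma sq_stakes_move_lt (nu : 'I_k -> R) (s : {ffun 'I_n -> 'I_k}) i j :
  j != s i ->
  stake a (P := Partition nu s) j + a i < stake a (P := Partition nu s) (s i) ->
  sq_stakes (Partition nu (move_player s i j)) < sq_stakes (Partition nu s).
Proof.
move=> j_new; rewrite !stake_partition => gain.
rewrite -subr_lt0 !sq_stakes_partition.
rewrite (sumrB_pair j_new) => [|t tj tsi]; last first.
  by rewrite load_move (negbTE tj) (negbTE tsi) subr0 addr0.
rewrite !load_move !eqxx (negbTE j_new) eq_sym (negbTE j_new).
by have := a_gt0 i; rewrite !expr2 => *; nra.
Qed.

Definition winning_profile (s : {ffun 'I_n -> 'I_k}) : bool :=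
  [forall t, h <= stake a (P := profile s) t].

Lemma sq_min_profile_stable (s : {ffun 'I_n -> 'I_k}) :
  winning_profile s ->
  (forall s', winning_profile s' -> sq_stakes (profile s) <= sq_stakes (profile s')) ->
  forall i j, j != s i ->
  stake a (P := profile s) (s i) <= stake a (P := profile s) j + a i.
Proof.
move=> /forallP win_s min_s i j j_new; rewrite leNgt !stake_profile; apply/negP.
set nu := water_fill (load s) L => gain; pose s' := move_player s i j.
have valid' : valid_partition L (Partition nu s') := valid_profile s.
have win_j : h <= nu j + load s j := win_s j.
have win' t : h <= stake a (P := Partition nu s') t.
  rewrite stake_partition load_move.
  case: (eqVneq t (s i)) => [->|_].
    by rewrite (eq_sym (s i)) (negbTE j_new); lra.
  case: (eqVneq t j) => [->|_]; first by have := a_ge0 i; lra.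
  by rewrite subr0 addr0; apply: win_s.
have /min_s : winning_profile s' by apply/forallP; apply: profile_maximin valid' win'.
apply/negP; rewrite -ltNge.
exact: le_lt_trans (sq_stakes_profile_le valid') (sq_stakes_move_lt j_new gain).
Qed.

Lemma nash_of_stable (s : {ffun 'I_n -> 'I_k}) :
  winning_profile s ->
  (forall i j, j != s i ->
     stake a (P := profile s) (s i) <= stake a (P := profile s) j + a i) ->
  nash_eq a L h (profile s).
Proof.
move=> /forallP win_s stable.
have stake_gt0 t : 0 < stake a (P := profile s) t := lt_le_trans h_gt0 (win_s t).
split; first exact: valid_profile.
split=> //; split=> [i j /= j_new|]; last split=> [i|j j' /= fill_pos].
- have win_ji : h <= stake a (P := profile s) j + a i by rewrite ler_wpDr.
  rewrite /atomic_payment !rho_win // !mulr1 ler_wpM2l // lef_pV2 ?posrE ?stable //.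
  exact: lt_le_trans h_gt0 win_ji.
- by rewrite rho_lose // mulr0 /atomic_payment rho_win // mulr1 divr_ge0 ?ltW.
- rewrite !rho_win // !div1r lef_pV2 ?posrE //.
  exact: water_fill_balanced.
Qed.

Lemma nwinning_profile (s : {ffun 'I_n -> 'I_k}) :
  winning_profile s -> nwinning a h (profile s) = k.
Proof.
move=> /forallP win_s; rewrite /nwinning -[RHS]card_ord.
by apply: eq_card => t; rewrite inE win_s.
Qed.

Lemma exists_nash_profile (s0 : {ffun 'I_n -> 'I_k}) :
  winning_profile s0 -> exists P, nash_eq a L h P /\ nwinning a h P = k.
Proof.
move=> win_s0; case: (arg_minP (fun s : {ffun _} => sq_stakes (profile s)) win_s0) => s win_s min_s.
exists (profile s); split; last exact: nwinning_profile.
by apply: nash_of_stable => //; apply: sq_min_profile_stable.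
Qed.

End Profiles.

Lemma exists_nash_of_OPT k :
  is_OPT a L h k -> exists P, nash_eq a L h P /\ nwinning a h P = k.
Proof.
move=> optk; have k_gt0 := OPT_gt0 optk; have [[P [vP Pk]] _] := optk.
have [f win_f] := merge_losing_pools vP Pk k_gt0.
apply: (@exists_nash_profile _ k_gt0 [ffun i => f (pool_of P i)]).
by apply/forallP; apply: profile_maximin (valid_coarsen f vP) win_f.
Qed.

Lemma PoS_of_OPT k : is_OPT a L h k -> PoS_is a L h k 1.
Proof.
(* nash_nwinning_gt0 rules out the junk value k / 0 = 0 of the ratio. *)
move=> optk; split=> [|P nashP].
  have [P [nashP Pk]] := exists_nash_of_OPT optk.
  by exists P; rewrite Pk divff // pnatr_eq0 -lt0n (OPT_gt0 optk).
rewrite ler_pdivlMr ?ltr0n ?nash_nwinning_gt0 // mul1r ler_nat.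
by apply: optk.2; case: nashP.
Qed.

End Oceanic.

Theorem theorem4p1 (R : realType) (n : nat) (a : 'I_n -> R) (L h : R)
  (hh : 0 < h) (hL : 0 <= L)
  (ha : forall i, 0 < a i /\ a i < h)
  (htot : h <= L + \sum_(i < n) a i) :
  exists opt : nat, is_OPT a L h opt /\ PoS_is a L h opt 1.
Proof.
have a_gt0 i : 0 < a i by case: (ha i).
have a_lt_h i : a i < h by case: (ha i).
have [k optk] := exists_OPT hh hL a_gt0 htot.
by exists k; split=> //; apply: PoS_of_OPT.
Qed.
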